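(* Under the setting described in the context, let $m^*$ be a Nash equilibrium, and put $l^*_{ij}=l_{ij}(m^* )$, $\hat a^*_j=\hat a_j(m^* )$. Then for every $i\in\mathcal N$ and every $\bar a_{\mathcal R_i}=(\bar a_j)_{j\in\mathcal R_i}\in\mathbb R^{\mathcal R_i}$, $u_i^A\Big(\bar a_{\mathcal R_i},\ \sum_{j\in\mathcal R_i}l^*_{ij}\bar a_j\Big)\ \le\ u_i^A\Big((\hat a^*_j)_{j\in\mathcal R_i},\ \sum_{j\in\mathcal R_i}l^*_{ij}\hat a^*_j\Big)$; that is, $(\hat a^*_j)_{j\in\mathcal R_i}$ maximizes $-\sum_{j\in\mathcal R_i}l^*_{ij}\bar a_j+u_i(\bar a_{\mathcal R_i})$ over $\bar a_i\in\mathcal A_i$, $\bar a_j\in\mathbb R$ ($j\in\mathcal R_i\setminus\{i\}$). Moreover $\sum_{k\in\mathcal C_j}l^*_{kj}=0$ for every $j\in\mathcal N$.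
   Context: Let $N\ge 1$ and $\mathcal N=\{1,\dots,N\}$. For each $i\in\mathcal N$ a set $\mathcal R_i\subseteq\mathcal N$ with $i\in\mathcal R_i$ is given; for $j\in\mathcal N$ put $\mathcal C_j=\{k\in\mathcal N: j\in\mathcal R_k\}$, and assume $|\mathcal C_j|\ge 3$ for all $j$. Each $\mathcal A_i\subset\mathbb R$ is a nonempty convex compact set with $0\in\mathcal A_i$. For each $i$, $u_i:\mathbb R^{\mathcal R_i}\to\mathbb R\cup\{-\infty\}$ is concave, real-valued whenever $a_i\in\mathcal A_i$, and $-\infty$ whenever $a_i\notin\mathcal A_i$. Aggregate utility: $u_i^A(a_{\mathcal R_i},t_i)=-t_i+u_i(a_{\mathcal R_i})$ if $a_i\in\mathcal A_i$, else $-\infty$. Game form: message $m_i=({}^ia_{\mathcal R_i},{}^i\pi_{\mathcal R_i})\in\mathcal M_i=\mathbb R^{\mathcal R_i}\times\mathbb R_+^{\mathcal R_i}$; $\hat a_i(m)=\frac1{|\mathcal C_i|}\sum_{k\in\mathcal C_i}{}^ka_i$. For each $j$ fix a bijection $\mathcal I_{\cdot j}:\mathcal C_j\to\{1,\dots,|\mathcal C_j|\}$, write $\mathcal C_{j(k)}$ for the user with index $k$ in $\mathcal C_j$, indices cyclic modulo $|\mathcal C_j|$. For $i\in\mathcal N$, $j\in\mathcal R_i$ let $i^+=\mathcal C_{j(\mathcal I_{ij}+1)}$, $i^{++}=\mathcal C_{j(\mathcal I_{ij}+2)}$, $l_{ij}(m)={}^{i^+}\pi_j-{}^{i^{++}}\pi_j$,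 and $\hat t_i(m)=\sum_{j\in\mathcal R_i}\Big[l_{ij}(m)\hat a_j(m)+{}^i\pi_j({}^ia_j-{}^{i^+}a_j)^2-{}^{i^+}\pi_j({}^{i^+}a_j-{}^{i^{++}}a_j)^2\Big]$. A Nash equilibrium is $m^*$ such that for all $i$ and $m_i\in\mathcal M_i$, $u_i^A\big((\hat a_j(m^* ))_{j\in\mathcal R_i},\hat t_i(m^* )\big)\ge u_i^A\big((\hat a_j(m_i,m^*_{-i}))_{j\in\mathcal R_i},\hat t_i(m_i,m^*_{-i})\big)$. *)

From mathcomp Require Import all_boot.
From Stdlib Require Import Reals Rtopology ClassicalEpsilon.
Set Implicit Arguments. Unset Strict Implicit. Unset Printing Implicit Defensive.

(* Users are 'I_N = {0,...,N-1} (standing for {1,...,N}).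
   Rs i : {set 'I_N} is the set R_i. *)

Definition Cset (N : nat) (Rs : 'I_N -> {set 'I_N}) (j : 'I_N) : {set 'I_N} :=
  [set k | j \in Rs k].

(* Extended reals  R u {-oo}: None = -oo. *)
Definition ereal := option R.
Definition ele (x y : ereal) : Prop :=
  match x, y with
  | None, _ => True
  | Some _, None => False
  | Some a, Some b => (a <= b)%R
  end.

(* Aggregate utility u_i^A(a, t) = -t + u_i(a) if a_i in A_i, else -oo.
   Action profiles are functions 'I_N -> R; u_i depends only on the
   coordinates in R_i (locality hypothesis in the theorem). *)
Definition uA (N : nat) (A : 'I_N -> R -> Prop) (u : 'I_N -> ('I_N -> R) -> R)
  (i : 'I_N) (a : 'I_N -> R) (t : R) : ereal :=
  if excluded_middle_informative (A i (a i)) then Some (- t + u i a)%R else None.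

(* The bijection I_{.j} : C_j -> {1..|C_j|} is given by a duplicate-free
   enumeration ord j of C_j: the user with (0-based) index n is nth (ord j) n,
   and I_{ij} = index i (ord j). *)
Definition cyc (N : nat) (ord : 'I_N -> seq 'I_N) (d : nat) (i j : 'I_N) : 'I_N :=
  nth i (ord j) ((index i (ord j) + d) %% size (ord j)).

(* Message profile m: ma k j = ^k a_j,  mp k j = ^k pi_j  (meaningful for j in R_k). *)
Definition ahat (N : nat) (Rs : 'I_N -> {set 'I_N}) (ma : 'I_N -> 'I_N -> R)
  (j : 'I_N) : R :=
  (/ INR #|Cset Rs j| * \big[Rplus/0%R]_(k in Cset Rs j) ma k j)%R.

Definition lij (N : nat) (ord : 'I_N -> seq 'I_N) (mp : 'I_N -> 'I_N -> R)
  (i j : 'I_N) : R :=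
  (mp (cyc ord 1 i j) j - mp (cyc ord 2 i j) j)%R.

Definition that (N : nat) (Rs : 'I_N -> {set 'I_N}) (ord : 'I_N -> seq 'I_N)
  (ma mp : 'I_N -> 'I_N -> R) (i : 'I_N) : R :=
  \big[Rplus/0%R]_(j in Rs i)
    (lij ord mp i j * ahat Rs ma j
     + mp i j * (ma i j - ma (cyc ord 1 i j) j) ^ 2
     - mp (cyc ord 1 i j) j * (ma (cyc ord 1 i j) j - ma (cyc ord 2 i j) j) ^ 2)%R.

Definition upd (N : nat) (m : 'I_N -> 'I_N -> R) (i : 'I_N) (mi : 'I_N -> R) :
  'I_N -> 'I_N -> R := fun k => if k == i then mi else m k.

Definition is_NE (N : nat) (Rs : 'I_N -> {set 'I_N}) (ord : 'I_N -> seq 'I_N)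
  (A : 'I_N -> R -> Prop) (u : 'I_N -> ('I_N -> R) -> R)
  (ma mp : 'I_N -> 'I_N -> R) : Prop :=
  (forall k j, j \in Rs k -> (0 <= mp k j)%R) /\
  forall (i : 'I_N) (mai mpi : 'I_N -> R),
    (forall j, j \in Rs i -> (0 <= mpi j)%R) ->
    ele (uA A u i (ahat Rs (upd ma i mai)) (that Rs ord (upd ma i mai) (upd mp i mpi) i))
        (uA A u i (ahat Rs ma) (that Rs ord ma mp i)).

(* Budget balance: for a fixed resource j, the map k |-> (d-th cyclic successor
   of k in the enumeration ord j) is a permutation of C_j.  Hence the prices
   pi_(k+) and pi_(k++) summed over k in C_j both give the same total, and the
   sum of l_kj = pi_(k+) - pi_(k++) vanishes.

   Optimality: given a target abar, user i deviates by announcing zero prices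
   and, for every j in R_i, the action proposal that shifts the average ahat_j
   exactly to abar_j (possible since i belongs to C_j).  As |C_j| >= 3 the two
   successors of i differ from i, so l_ij and the "penalty" of the successor
   are unaffected; the deviation tax is sum l_ij abar_j - Q while the
   equilibrium tax is sum l_ij ahat_j + P - Q with P >= 0.  The Nash
   inequality for this deviation therefore yields the claim (i in R_i makes
   the deviation reach abar_i, and locality of u_i makes u_i see only abar). *)
From mathcomp Require Import all_boot.
From Stdlib Require Import Reals Rtopology.
From mathcomp Require Import zify.
From Stdlib Require Import Lra ClassicalEpsilon.
From HB Require Import structures.

Set Implicit Arguments.
Unset Strict Implicit.

HB.instance Definition _ :=
  Monoid.isComLaw.Build R 0%R Rplus
    (fun a b c => esym (Rplus_assoc a b c)) Rplus_comm Rplus_0_l.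

Lemma big_Rminus (I : finType) (P : pred I) (F G : I -> R) :
  \big[Rplus/0%R]_(i | P i) (F i - G i)%R =
  (\big[Rplus/0%R]_(i | P i) F i - \big[Rplus/0%R]_(i | P i) G i)%R.
Proof.
apply: (Rplus_eq_reg_r (\big[Rplus/0%R]_(i | P i) G i)).
rewrite -big_split /=; ring_simplify; apply: eq_bigr => k _; ring.
Qed.

Lemma big_Rle0 (I : finType) (P : pred I) (F : I -> R) :
  (forall i, P i -> 0 <= F i)%R -> (0 <= \big[Rplus/0%R]_(i | P i) F i)%R.
Proof.
move=> F_ge0; apply: (big_ind (fun x => 0 <= x)%R) => //; first exact: Rle_refl.
exact: Rplus_le_le_0_compat.
Qed.

Section CyclicSuccessor.

Variables (N : nat) (ord : 'I_N -> seq 'I_N) (j : 'I_N).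
Hypothesis ord_uniq : uniq (ord j).

Lemma index_cyc d k : k \in ord j ->
  index (cyc ord d k j) (ord j) = ((index k (ord j) + d) %% size (ord j))%N.
Proof.
move=> k_in; have n_gt0 : (0 < size (ord j))%N by case: (ord j) k_in.
by rewrite /cyc index_uniq // ltn_mod.
Qed.

Lemma cyc_neq d k : k \in ord j -> (0 < d < size (ord j))%N ->
  cyc ord d k j != k.
Proof.
move=> k_in /andP [d_gt0 d_lt]; apply: contraTneq d_gt0 => E.
have idx_lt : (index k (ord j) < size (ord j))%N by rewrite index_mem.
have shift : (index k (ord j) + 0 == index k (ord j) + d %[mod size (ord j)]).
  by rewrite addn0 -index_cyc // E modn_small.
by move: shift; rewrite eqn_modDl mod0n modn_small // => /eqP <-.
Qed.

Lemma cyc_perm d : perm_eq [seq cyc ord d k j | k <- ord j] (ord j).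
Proof.
have sub : {subset [seq cyc ord d k j | k <- ord j] <= ord j}.
  move=> x /mapP [k k_in ->]; apply: mem_nth.
  by rewrite ltn_mod; case: (ord j) k_in.
have inj : {in ord j &, injective (fun k => cyc ord d k j)}.
  move=> x y x_in y_in E; move: (index_cyc d x_in); rewrite E index_cyc //.
  move/eqP; rewrite eqn_modDr !modn_small ?index_mem // => /eqP Ei.
  by rewrite -(nth_index x x_in) -(nth_index x y_in) Ei.
have uniq_map : uniq [seq cyc ord d k j | k <- ord j] by rewrite map_inj_in_uniq.
have [_ same_mem] := uniq_min_size uniq_map sub (eq_leq (esym (size_map _ _))).
exact: uniq_perm uniq_map ord_uniq same_mem.
Qed.

Lemma big_cyc d (G : 'I_N -> R) :
  \big[Rplus/0%R]_(k <- ord j) G (cyc ord d k j) = \big[Rplus/0%R]_(k <- ord j) G k.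
Proof. by rewrite -(big_map (fun k => cyc ord d k j) xpredT G); apply/perm_big/cyc_perm. Qed.

Lemma big_lij_ord (mp : 'I_N -> 'I_N -> R) :
  \big[Rplus/0%R]_(k <- ord j) lij ord mp k j = 0%R.
Proof.
have E : \big[Rplus/0%R]_(k <- ord j) (lij ord mp k j + mp (cyc ord 2 k j) j)%R
         = \big[Rplus/0%R]_(k <- ord j) mp (cyc ord 1 k j) j.
  by apply: eq_bigr => k _; rewrite /lij; ring.
move: E; rewrite big_split /= !(big_cyc _ (fun k => mp k j)); lra.
Qed.

End CyclicSuccessor.

Section Mechanism.

Variables (N : nat) (Rs : 'I_N -> {set 'I_N}) (ord : 'I_N -> seq 'I_N).
Variables (ma mp : 'I_N -> 'I_N -> R).
Hypothesis ord_enum :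
  forall j, uniq (ord j) /\ (forall k, (k \in ord j) = (k \in Cset Rs j)).
Hypothesis Cset_ge3 : forall j, (3 <= #|Cset Rs j|)%N.

Lemma size_ord j : size (ord j) = #|Cset Rs j|.
Proof.
have [ord_uniq ord_mem] := ord_enum j.
by rewrite -(card_uniqP ord_uniq); apply: eq_card => k; rewrite ord_mem.
Qed.

Lemma big_Cset_ord j (F : 'I_N -> R) :
  \big[Rplus/0%R]_(k in Cset Rs j) F k = \big[Rplus/0%R]_(k <- ord j) F k.
Proof.
have [ord_uniq ord_mem] := ord_enum j.
by rewrite big_uniq //; apply: eq_bigl => k; rewrite ord_mem.
Qed.

Lemma cyc12_neq i j : j \in Rs i -> cyc ord 1 i j != i /\ cyc ord 2 i j != i.
Proof.
move=> j_in; have [ord_uniq ord_mem] := ord_enum j.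
have i_in : i \in ord j by rewrite ord_mem inE.
have := Cset_ge3 j; rewrite -size_ord => size_ge3.
by split; apply: cyc_neq => //; apply/andP; split; lia.
Qed.

(* Alone, user i can move the average proposal ahat_j to any abar_j, j in R_i:
   it suffices to shift its own proposal by |C_j| (abar_j - ahat_j). *)
Definition steer_action (i : 'I_N) (abar : 'I_N -> R) (j : 'I_N) : R :=
  (ma i j + INR #|Cset Rs j| * (abar j - ahat Rs ma j))%R.

Lemma ahat_steer i abar j : j \in Rs i ->
  ahat Rs (upd ma i (steer_action i abar)) j = abar j.
Proof.
move=> j_in; have i_in : i \in Cset Rs j by rewrite inE.
have others : \big[Rplus/0%R]_(k in Cset Rs j | k != i) upd ma i (steer_action i abar) k j
            = \big[Rplus/0%R]_(k in Cset Rs j | k != i) ma k j.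
  by apply: eq_bigr => k /andP [_ /negbTE k_neq]; rewrite /upd k_neq.
rewrite /steer_action {1}/ahat (bigD1 i i_in) /= others {1}/upd eqxx.
rewrite /ahat (bigD1 i i_in) /=.
set S := \big[Rplus/0%R]_(k in Cset Rs j | k != i) ma k j.
set n := INR #|Cset Rs j|.
have n_neq0 : n <> 0%R by apply: not_0_INR; have := Cset_ge3 j; lia.
by field.
Qed.

(* The penalty term charged to user i for disagreeing with its successor,
   and the one charged to its successor in turn (refunded to user i). *)
Definition own_penalty (i j : 'I_N) : R :=
  (mp i j * (ma i j - ma (cyc ord 1 i j) j) ^ 2)%R.

Lemma own_penalty_ge0 i : (forall j, j \in Rs i -> 0 <= mp i j)%R ->
  (0 <= \big[Rplus/0%R]_(j in Rs i) own_penalty i j)%R.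
Proof.
move=> mp_ge0; apply: big_Rle0 => j j_in; apply: Rmult_le_pos; first exact: mp_ge0.
by rewrite /= Rmult_1_r; apply: Rle_0_sqr.
Qed.

Definition succ_penalty (i j : 'I_N) : R :=
  (mp (cyc ord 1 i j) j * (ma (cyc ord 1 i j) j - ma (cyc ord 2 i j) j) ^ 2)%R.

Lemma that_split i :
  that Rs ord ma mp i =
  (\big[Rplus/0%R]_(j in Rs i) (lij ord mp i j * ahat Rs ma j)
   + \big[Rplus/0%R]_(j in Rs i) own_penalty i j
   - \big[Rplus/0%R]_(j in Rs i) succ_penalty i j)%R.
Proof. by rewrite /that big_Rminus big_split. Qed.

Lemma that_zero_price_dev i mai :
  that Rs ord (upd ma i mai) (upd mp i (fun _ => 0%R)) i =
  (\big[Rplus/0%R]_(j in Rs i) (lij ord mp i j * ahat Rs (upd ma i mai) j)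
   - \big[Rplus/0%R]_(j in Rs i) succ_penalty i j)%R.
Proof.
rewrite /that -big_Rminus; apply: eq_bigr => j j_in.
have [neq1 neq2] := cyc12_neq j_in.
by rewrite /lij /upd /succ_penalty (negbTE neq1) (negbTE neq2) eqxx; ring.
Qed.

Lemma that_steer i abar :
  that Rs ord (upd ma i (steer_action i abar)) (upd mp i (fun _ => 0%R)) i =
  (\big[Rplus/0%R]_(j in Rs i) (lij ord mp i j * abar j)
   - \big[Rplus/0%R]_(j in Rs i) succ_penalty i j)%R.
Proof.
rewrite that_zero_price_dev; congr (_ - _)%R.
by apply: eq_bigr => j j_in; rewrite ahat_steer.
Qed.

End Mechanism.

Theorem mainTheorem5 (N : nat) (Rs : 'I_N -> {set 'I_N})
  (ord : 'I_N -> seq 'I_N)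
  (A : 'I_N -> R -> Prop) (u : 'I_N -> ('I_N -> R) -> R)
  (ma mp : 'I_N -> 'I_N -> R) :
  (0 < N)%N ->
  (forall i, i \in Rs i) ->
  (forall j, (3 <= #|Cset Rs j|)%N) ->
  (forall j, uniq (ord j) /\ (forall k, (k \in ord j) = (k \in Cset Rs j))) ->
  (forall i, A i 0%R) ->
  (forall i x y t, A i x -> A i y -> (0 <= t <= 1)%R -> A i (t * x + (1 - t) * y)%R) ->
  (forall i, compact (A i)) ->
  (forall i (a b : 'I_N -> R), (forall j, j \in Rs i -> a j = b j) -> u i a = u i b) ->
  (forall i (a b : 'I_N -> R) t, A i (a i) -> A i (b i) -> (0 <= t <= 1)%R ->
     (t * u i a + (1 - t) * u i b <= u i (fun j => t * a j + (1 - t) * b j))%R) ->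
  is_NE Rs ord A u ma mp ->
  (forall (i : 'I_N) (abar : 'I_N -> R),
     ele (uA A u i abar (\big[Rplus/0%R]_(j in Rs i) (lij ord mp i j * abar j)%R))
         (uA A u i (ahat Rs ma)
             (\big[Rplus/0%R]_(j in Rs i) (lij ord mp i j * ahat Rs ma j)%R)))
  /\ (forall j : 'I_N, \big[Rplus/0%R]_(k in Cset Rs j) lij ord mp k j = 0%R).
Proof.
move=> _ own_in Cset_ge3 ord_enum _ _ _ u_local _ [mp_ge0 nash].
split=> [i abar|j]; last first.
  by rewrite (big_Cset_ord ord_enum) big_lij_ord //; case: (ord_enum j).
have steer_ahat j : j \in Rs i ->
    ahat Rs (upd ma i (steer_action Rs ma i abar)) j = abar j by apply: ahat_steer.
have := own_penalty_ge0 ord ma (mp_ge0 i).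
have := nash i (steer_action Rs ma i abar) (fun _ => 0%R) (fun _ _ => Rle_refl 0).
rewrite (that_steer _ _ ord_enum Cset_ge3) that_split.
rewrite /uA (steer_ahat i (own_in i)) (u_local i _ abar steer_ahat).
case: excluded_middle_informative => //= _.
case: excluded_middle_informative => //= _; lra.
Qed.
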